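(* Suppose $K\in C^2([-1,0])$ with $K_p>0$ is such that $h(q,p)=K(p)$ solves the height equation, and that $\mathscr S(K)=\mathscr S(H)$. Then $$\int_{-1}^0\frac{(K_p-H_p)^3}{H_p^2K_p^2}\,dp=0.$$
   Context: Fix $\alpha\in(0,1)$, $\rho\in C^{2+\alpha}([-1,0])$ with $\rho>0$, $\rho_p\le0$, $H\in C^{3+\alpha}([-1,0])$ with $H(-1)=0$, $H(0)=1$, $H_p>0$, and $F>0$. With $R=\mathbb R\times(-1,0)$, $T=\{p=0\}$, $B=\{p=-1\}$, the height equation for $h$ is $\big(-\frac{1+h_q^2}{2h_p^2}+\frac1{2H_p^2}\big)_p+\big(\frac{h_q}{h_p}\big)_q-\frac1{F^2}\rho_p(h-H)=0$ in $R$, $\frac{1+h_q^2}{2h_p^2}-\frac1{2H_p^2}+\frac1{F^2}\rho(h-1)=0$ on $T$, $h=0$ on $B$. The flow force of a $q$-independent $h=K(p)$ is $\mathscr S(K)=\int_{-1}^0\Big[\frac1{2K_p^2}+\frac1{2H_p^2}-\frac1{F^2}\rho(K-H)-\frac1{F^2}\int_0^p\rho H_p\,dp'\Big]K_p\,dp$. *)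

From Stdlib Require Import Reals.
From Coquelicot Require Import Coquelicot.
Open Scope R_scope.

(* The closed interval [-1,0] (the p-range of the strip R = IR x (-1,0) together with T and B). *)
Definition Icl (p : R) : Prop := -1 <= p <= 0.

Definition deriv_on (f f' : R -> R) : Prop :=
  forall x, Icl x ->
    filterlim (fun y => (f y - f x) / (y - x))
      (within (fun y => Icl y /\ y <> x) (locally x)) (locally (f' x)).

Definition cont_on (f : R -> R) : Prop :=
  forall x, Icl x -> filterlim f (within Icl (locally x)) (locally (f x)).

Definition holder_on (alpha : R) (f : R -> R) : Prop :=
  exists C, forall x y, Icl x -> Icl y -> x <> y ->
    Rabs (f x - f y) <= C * Rpower (Rabs (x - y)) alpha.

Definition C2_on (f f1 f2 : R -> R) : Prop :=
  deriv_on f f1 /\ deriv_on f1 f2 /\ cont_on f2.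

Definition C2a_on (alpha : R) (f f1 f2 : R -> R) : Prop :=
  C2_on f f1 f2 /\ holder_on alpha f2.

Definition C3a_on (alpha : R) (f f1 f2 f3 : R -> R) : Prop :=
  deriv_on f f1 /\ deriv_on f1 f2 /\ deriv_on f2 f3 /\ cont_on f3 /\
  holder_on alpha f3.

(* Classical solution h(q,p) of the height equation, with background data
   rho (derivative rhop), H (derivative Hp) and Froude number F:
     ( -(1+h_q^2)/(2h_p^2) + 1/(2H_p^2) )_p + (h_q/h_p)_q - rho_p (h-H)/F^2 = 0  in R,
     (1+h_q^2)/(2h_p^2) - 1/(2H_p^2) + rho (h-1)/F^2 = 0                       on T,
     h = 0                                                                    on B.
   hq, hp are the first partial derivatives of h on the closure of R
   (hp one-sided at p = -1, 0). *)
Definition height_eq (F : R) (rho rhop H Hp : R -> R) (h : R -> R -> R) : Prop :=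
  exists hq hp : R -> R -> R,
    (forall q p, Icl p -> is_derive (fun t => h t p) q (hq q p)) /\
    (forall q, deriv_on (fun s => h q s) (fun s => hp q s)) /\
    (forall q p, Icl p -> hp q p <> 0) /\
    (forall q p, -1 < p < 0 ->
       exists A B,
         is_derive (fun s => - (1 + (hq q s)^2) / (2 * (hp q s)^2)
                             + 1 / (2 * (Hp s)^2)) p A /\
         is_derive (fun t => hq t p / hp t p) q B /\
         A + B - / F^2 * rhop p * (h q p - H p) = 0) /\
    (forall q, (1 + (hq q 0)^2) / (2 * (hp q 0)^2) - 1 / (2 * (Hp 0)^2)
               + / F^2 * rho 0 * (h q 0 - 1) = 0) /\
    (forall q, h q (-1) = 0).

Definition flow_force (F : R) (rho H Hp : R -> R) (K Kp : R -> R) : R :=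
  RInt (fun p =>
     (1 / (2 * (Kp p)^2) + 1 / (2 * (Hp p)^2) - / F^2 * rho p * (K p - H p)
      - / F^2 * RInt (fun p' => rho p' * Hp p') 0 p) * Kp p) (-1) 0.

(* For a q-independent solution K the height equation reduces to the ODE
   (1/(2 H_p^2) - 1/(2 K_p^2))_p = rho_p (K - H) / F^2 on (-1,0), with the surface
   condition at p = 0 and K = H at p = -1.  With D = K - H and
   P(p) = int_0^p rho H_p, the function
     Phi = - P D / F^2 - rho D^2 / (2 F^2) + (1/(2 H_p^2) - 1/(2 K_p^2)) D / 2
   has, by the ODE, derivative equal to the difference of the flow-force integrands
   of K and H minus (K_p - H_p)^3 / (4 H_p^2 K_p^2), and it vanishes at both ends by
   the boundary conditions.  Hence S(K) - S(H) is a quarter of the integral in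
   question.  To apply the calculus on R, functions on [-1,0] are extended to R by
   composing with the projection onto [-1,0]. *)

From Stdlib Require Import Reals Lra.
From Coquelicot Require Import Coquelicot.
Open Scope R_scope.

Notation continuousR := (@continuous R_UniformSpace R_UniformSpace).

Lemma ball_R (x e y : R) : ball x e y <-> Rabs (y - x) < e.
Proof. reflexivity. Qed.
Lemma continuous_const_R (a x : R) : continuousR (fun _ => a) x.
Proof. apply continuous_const. Qed.
Lemma continuous_plus_R (f g : R -> R) x :
  continuousR f x -> continuousR g x -> continuousR (fun y => f y + g y) x.
Proof. apply (continuous_plus (V:=R_NormedModule)). Qed.
Lemma continuous_opp_R (f : R -> R) x :
  continuousR f x -> continuousR (fun y => - f y) x.
Proof. apply (continuous_opp (V:=R_NormedModule)). Qed.
Lemma continuous_minus_R (f g : R -> R) x :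
  continuousR f x -> continuousR g x -> continuousR (fun y => f y - g y) x.
Proof. apply (continuous_minus (V:=R_NormedModule)). Qed.
Lemma continuous_mult_R (f g : R -> R) x :
  continuousR f x -> continuousR g x -> continuousR (fun y => f y * g y) x.
Proof. apply (continuous_mult (K:=R_AbsRing)). Qed.
Lemma continuous_div_R (f g : R -> R) x :
  continuousR f x -> continuousR g x -> g x <> 0 -> continuousR (fun y => f y / g y) x.
Proof. intros Hf Hg Hg0. apply continuous_mult_R; [exact Hf|]. now apply continuous_Rinv_comp. Qed.
Lemma continuous_pow_R (f : R -> R) n x :
  continuousR f x -> continuousR (fun y => f y ^ n) x.
Proof.
  intros Hf. induction n as [|n IH]; simpl.
  - apply continuous_const_R.
  - now apply continuous_mult_R.
Qed.

Definition clamp (x : R) : R := Rmax (-1) (Rmin 0 x).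
Definition extend (f : R -> R) (x : R) : R := f (clamp x).

Lemma Icl_clamp x : Icl (clamp x).
Proof. unfold clamp, Icl, Rmax, Rmin. repeat destruct Rle_dec; lra. Qed.

Lemma clamp_id x : Icl x -> clamp x = x.
Proof. unfold clamp, Icl, Rmax, Rmin. intros. repeat destruct Rle_dec; lra. Qed.

Lemma extend_id f x : Icl x -> extend f x = f x.
Proof. intros Hx. unfold extend. now rewrite clamp_id. Qed.

Lemma clamp_1lipschitz x y : Rabs (clamp y - clamp x) <= Rabs (y - x).
Proof.
  unfold clamp, Rmax, Rmin, Rabs.
  repeat destruct Rle_dec; repeat destruct Rcase_abs; lra.
Qed.

Lemma Icl_interior_locally x : -1 < x < 0 -> locally x (fun y => -1 < y < 0).
Proof.
  intros Hx. assert (Hr : 0 < Rmin (x + 1) (- x)) by (apply Rmin_pos; lra).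
  exists (mkposreal _ Hr). intros y Hy. rewrite ball_R in Hy. simpl in Hy.
  pose proof (Rmin_l (x + 1) (- x)); pose proof (Rmin_r (x + 1) (- x)).
  unfold Rabs in Hy; destruct Rcase_abs; lra.
Qed.

Lemma is_derive_Icl_ext (f g : R -> R) (x l : R) :
  (forall y, Icl y -> f y = g y) -> -1 < x < 0 -> is_derive f x l -> is_derive g x l.
Proof.
  intros Efg Hx. apply is_derive_ext_loc.
  apply (filter_imp (fun y => -1 < y < 0)); [|now apply Icl_interior_locally].
  intros y Hy. apply Efg. unfold Icl; lra.
Qed.

Lemma continuous_extend f : cont_on f -> forall x, continuousR (extend f) x.
Proof.
  intros Hf x. apply filterlim_locally. intros eps.
  destruct (proj1 (filterlim_locally _ _) (Hf (clamp x) (Icl_clamp x)) eps) as [d Hd].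
  exists d. intros y Hy. apply Hd; [|apply Icl_clamp].
  apply ball_R. rewrite ball_R in Hy.
  eapply Rle_lt_trans; [apply clamp_1lipschitz|exact Hy].
Qed.

Lemma deriv_on_cont_on f f' : deriv_on f f' -> cont_on f.
Proof.
  intros Hd x Hx. apply filterlim_locally. intros eps.
  destruct (proj1 (filterlim_locally _ _) (Hd x Hx) (mkposreal 1 Rlt_0_1)) as [d Hd1].
  set (M := Rabs (f' x) + 1).
  assert (HM : 0 < M) by (pose proof (Rabs_pos (f' x)); unfold M; lra).
  assert (Hr : 0 < Rmin d (eps / M)).
  { apply Rmin_pos; [apply cond_pos|apply Rdiv_lt_0_compat; [apply cond_pos|exact HM]]. }
  exists (mkposreal _ Hr). intros y Hy Iy. rewrite ball_R in Hy |- *. simpl in Hy.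
  destruct (Req_dec y x) as [->|Hne].
  { rewrite Rminus_eq_0, Rabs_R0. apply cond_pos. }
  assert (Hyd : Rabs (y - x) < d) by (eapply Rlt_le_trans; [exact Hy|apply Rmin_l]).
  assert (Hye : Rabs (y - x) * M < eps).
  { apply (Rmult_lt_reg_r (/ M)); [now apply Rinv_0_lt_compat|].
    rewrite Rmult_assoc, Rinv_r, Rmult_1_r by lra.
    eapply Rlt_le_trans; [exact Hy|apply Rmin_r]. }
  specialize (Hd1 y Hyd (conj Iy Hne)). rewrite ball_R in Hd1. simpl in Hd1.
  set (q := (f y - f x) / (y - x)) in *.
  assert (Hq : Rabs q <= M).
  { pose proof (Rabs_triang_inv q (f' x)). unfold M. lra. }
  replace (f y - f x) with (q * (y - x)) by (unfold q; field; lra).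
  rewrite Rabs_mult, Rmult_comm.
  eapply Rle_lt_trans; [|exact Hye].
  apply Rmult_le_compat_l; [apply Rabs_pos|exact Hq].
Qed.

Lemma continuous_extend_deriv_on f f' : deriv_on f f' -> forall x, continuousR (extend f) x.
Proof. intros Hd. exact (continuous_extend _ (deriv_on_cont_on _ _ Hd)). Qed.

Lemma is_derive_extend f f' x :
  deriv_on f f' -> -1 < x < 0 -> is_derive (extend f) x (extend f' x).
Proof.
  intros Hd Hx. assert (Ix : Icl x) by (unfold Icl; lra).
  rewrite (extend_id _ _ Ix).
  apply is_derive_Reals. intros eps Heps.
  destruct (proj1 (filterlim_locally _ _) (Hd x Ix) (mkposreal eps Heps)) as [d Hd1].
  destruct (Icl_interior_locally x Hx) as [r Hr].
  assert (Hm : 0 < Rmin d r) by (apply Rmin_pos; apply cond_pos).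
  exists (mkposreal _ Hm). intros h Hh0 Hh. simpl in Hh.
  assert (Hb : forall e : posreal, Rmin d r <= e -> ball x e (x + h)).
  { intros e He. apply ball_R. replace (x + h - x) with h by ring. lra. }
  assert (Ixh : Icl (x + h)).
  { pose proof (Hr (x + h) (Hb r (Rmin_r d r))). unfold Icl; lra. }
  unfold extend. rewrite (clamp_id _ Ixh), (clamp_id _ Ix).
  assert (Hne : x + h <> x) by (intro E; apply Hh0; lra).
  specialize (Hd1 _ (Hb d (Rmin_l d r)) (conj Ixh Hne)). rewrite ball_R in Hd1.
  simpl in Hd1. now replace (x + h - x) with h in Hd1 by ring.
Qed.

Lemma deriv_on_unique f f1 f2 x : deriv_on f f1 -> deriv_on f f2 -> Icl x -> f1 x = f2 x.
Proof.
  intros H1 H2 Hx.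
  assert (Hproper : ProperFilter' (within (fun y => Icl y /\ y <> x) (locally x))).
  { split; [|apply within_filter, locally_filter].
    intros [e He]. unfold Icl in Hx.
    set (t := Rmin e 1 / 2).
    assert (Ht : 0 < t < e /\ t <= 1 / 2).
    { pose proof (Rmin_l e 1); pose proof (Rmin_r e 1).
      assert (0 < Rmin e 1) by (apply Rmin_pos; [apply cond_pos|lra]). unfold t; lra. }
    (* [-1,0] \ {x} meets every ball around x *)
    set (y := if Rle_dec x (-1/2) then x + t else x - t).
    apply (He y).
    - apply ball_R. unfold y. destruct Rle_dec;
        [replace (x + t - x) with t by ring | replace (x - t - x) with (- t) by ring;
         rewrite Rabs_Ropp]; rewrite Rabs_pos_eq; lra.
    - unfold y, Icl. destruct Rle_dec; split; lra. }
  exact (filterlim_locally_unique _ _ _ (H1 x Hx) (H2 x Hx)).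
Qed.

Lemma is_derive_RInt_continuous (f : R -> R) a x :
  (forall y, continuousR f y) -> is_derive (RInt f a) x (f x).
Proof.
  intros Hf. apply (is_derive_RInt f (RInt f a) a); [|apply Hf].
  apply filter_forall. intro b.
  apply (RInt_correct (V:=R_CompleteNormedModule)),
        (ex_RInt_continuous (V:=R_CompleteNormedModule)).
  intros; apply Hf.
Qed.

Lemma RInt_interior_derive (Phi f : R -> R) a b :
  a <= b -> (forall x, continuousR f x) ->
  (forall x, a <= x <= b -> continuousR Phi x) ->
  (forall x, a < x < b -> is_derive Phi x (f x)) ->
  RInt f a b = Phi b - Phi a.
Proof.
  intros Hab Hf HPhi Hd.
  set (Psi := fun x => Phi x - RInt f a x).
  destruct (MVT_gen Psi a b (fun _ => 0)) as [c [_ Hc]].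
  - rewrite Rmin_left, Rmax_right by exact Hab. intros x Hx.
    replace 0 with (f x - f x) by ring.
    apply (is_derive_minus (V:=R_NormedModule)); [now apply Hd|].
    now apply is_derive_RInt_continuous.
  - rewrite Rmin_left, Rmax_right by exact Hab. intros x Hx.
    apply continuity_pt_filterlim, continuous_minus_R; [now apply HPhi|].
    apply (ex_derive_continuous (V:=R_NormedModule)).
    eexists. now apply is_derive_RInt_continuous.
  - unfold Psi in Hc. rewrite (RInt_point (V:=R_CompleteNormedModule)) in Hc.
    change (zero : R) with 0 in Hc. lra.
Qed.

Definition bernoulli_gap (Hp Kp : R -> R) (p : R) : R :=
  1 / (2 * Hp p ^ 2) - 1 / (2 * Kp p ^ 2).

Definition cubic_gap (Hp Kp : R -> R) (p : R) : R :=
  (Kp p - Hp p) ^ 3 / (Hp p ^ 2 * Kp p ^ 2).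

Definition flow_force_density (c : R) (rho H Hp K Kp : R -> R) (p : R) : R :=
  (1 / (2 * Kp p ^ 2) + 1 / (2 * Hp p ^ 2) - c * rho p * (K p - H p)
   - c * RInt (fun p' => rho p' * Hp p') 0 p) * Kp p.

Section FlowForceDifference.

Variables (c : R) (rho rhop H Hp K Kp : R -> R).
Hypothesis rho_cont : forall x, continuousR rho x.
Hypothesis H_cont : forall x, continuousR H x.
Hypothesis Hp_cont : forall x, continuousR Hp x.
Hypothesis K_cont : forall x, continuousR K x.
Hypothesis Kp_cont : forall x, continuousR Kp x.
Hypothesis Hp_pos : forall x, 0 < Hp x.
Hypothesis Kp_pos : forall x, 0 < Kp x.
Hypothesis rho_deriv : forall x, -1 < x < 0 -> is_derive rho x (rhop x).
Hypothesis H_deriv : forall x, -1 < x < 0 -> is_derive H x (Hp x).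
Hypothesis K_deriv : forall x, -1 < x < 0 -> is_derive K x (Kp x).
Hypothesis gap_deriv :
  forall x, -1 < x < 0 -> is_derive (bernoulli_gap Hp Kp) x (c * rhop x * (K x - H x)).
Hypothesis gap_top : bernoulli_gap Hp Kp 0 = c * rho 0 * (K 0 - H 0).
Hypothesis K_bottom : K (-1) = H (-1).

Definition mass_flux (p : R) : R := RInt (fun p' => rho p' * Hp p') 0 p.

Definition flow_force_potential (p : R) : R :=
  - c * (mass_flux p * (K p - H p)) - c / 2 * (rho p * (K p - H p) ^ 2)
  + / 2 * (bernoulli_gap Hp Kp p * (K p - H p)).

Lemma mass_flux_derive x : is_derive mass_flux x (rho x * Hp x).
Proof.
  apply (is_derive_RInt_continuous (fun y => rho y * Hp y)).
  intro y. now apply continuous_mult_R.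
Qed.

Lemma flow_force_potential_derive x : -1 < x < 0 ->
  is_derive flow_force_potential x
    (flow_force_density c rho H Hp K Kp x - flow_force_density c rho H Hp H Hp x
     - / 4 * cubic_gap Hp Kp x).
Proof.
  intros Hx.
  assert (dP : Derive (fun t => mass_flux t) x = rho x * Hp x)
    by exact (is_derive_unique _ _ _ (mass_flux_derive x)).
  assert (drho : Derive (fun t => rho t) x = rhop x)
    by exact (is_derive_unique _ _ _ (rho_deriv x Hx)).
  assert (dH : Derive (fun t => H t) x = Hp x)
    by exact (is_derive_unique _ _ _ (H_deriv x Hx)).
  assert (dK : Derive (fun t => K t) x = Kp x)
    by exact (is_derive_unique _ _ _ (K_deriv x Hx)).
  assert (dG : Derive (fun t => bernoulli_gap Hp Kp t) x = c * rhop x * (K x - H x))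
    by exact (is_derive_unique _ _ _ (gap_deriv x Hx)).
  unfold flow_force_potential. auto_derive.
  - repeat split; eexists; eauto using mass_flux_derive.
  - rewrite dP, drho, dH, dK, dG.
    unfold flow_force_density, cubic_gap, bernoulli_gap. fold (mass_flux x).
    pose proof (Hp_pos x); pose proof (Kp_pos x). field. lra.
Qed.

Lemma mass_flux_continuous x : continuousR mass_flux x.
Proof.
  apply (ex_derive_continuous (V:=R_NormedModule)).
  eexists. apply mass_flux_derive.
Qed.

Ltac solve_continuous :=
  repeat match goal with
  | |- continuousR (fun y => ?a) _ =>
      match a with context [y] => fail 1 | _ => apply continuous_const_R end
  | |- continuousR (fun y => _ - _) _ => apply continuous_minus_R
  | |- continuousR (fun y => _ + _) _ => apply continuous_plus_R
  | |- continuousR (fun y => - _) _ => apply continuous_opp_R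
  | |- continuousR (fun y => _ * _) _ => apply continuous_mult_R
  | |- continuousR (fun y => _ / _) _ => apply continuous_div_R
  | |- continuousR (fun y => _ ^ _) _ => apply continuous_pow_R
  | |- continuousR (RInt (fun p' => rho p' * Hp p') 0) _ => apply mass_flux_continuous
  | |- continuousR mass_flux _ => apply mass_flux_continuous
  | Hf : forall x, continuousR ?f x |- continuousR ?f _ => apply Hf
  | Hf : forall x, continuousR ?f x |- continuousR (fun y => ?f y) _ => apply Hf
  | |- _ <> 0 => apply Rgt_not_eq
  | |- _ > 0 => apply Rlt_gt
  | |- 0 < _ * _ => apply Rmult_lt_0_compat
  | |- 0 < _ ^ _ => apply pow_lt
  | Hf : forall x, 0 < ?f x |- 0 < ?f _ => apply Hf
  | |- 0 < _ => lra
  end.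

Lemma flow_force_density_continuous (F1 F1p : R -> R) :
  (forall x, continuousR F1 x) -> (forall x, continuousR F1p x) ->
  (forall x, 0 < F1p x) ->
  forall x, continuousR (flow_force_density c rho H Hp F1 F1p) x.
Proof.
  intros F1_cont F1p_cont F1p_pos x. unfold flow_force_density.
  solve_continuous.
Qed.

Lemma flow_force_difference :
  RInt (flow_force_density c rho H Hp K Kp) (-1) 0
  - RInt (flow_force_density c rho H Hp H Hp) (-1) 0
  = / 4 * RInt (cubic_gap Hp Kp) (-1) 0.
Proof.
  assert (dens_K := flow_force_density_continuous K Kp K_cont Kp_cont Kp_pos).
  assert (dens_H := flow_force_density_continuous H Hp H_cont Hp_cont Hp_pos).
  assert (cubic_cont : forall x, continuousR (cubic_gap Hp Kp) x)
    by (intro; unfold cubic_gap; solve_continuous).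
  assert (ex_RInt_of : forall f : R -> R, (forall x, continuousR f x) -> ex_RInt f (-1) 0)
    by (intros f Hf; apply (ex_RInt_continuous (V:=R_CompleteNormedModule)); auto).
  assert (Hpotential : RInt (fun x => flow_force_density c rho H Hp K Kp x
                              - flow_force_density c rho H Hp H Hp x
                              - / 4 * cubic_gap Hp Kp x) (-1) 0
                 = flow_force_potential 0 - flow_force_potential (-1)).
  { apply RInt_interior_derive; [lra| | |exact flow_force_potential_derive].
    - intro x. solve_continuous.
    - intros x _. unfold flow_force_potential, bernoulli_gap. solve_continuous. }
  rewrite (RInt_minus (V:=R_CompleteNormedModule)),
          (RInt_minus (V:=R_CompleteNormedModule)),
          (RInt_scal (V:=R_CompleteNormedModule)) in Hpotential; auto.
  2: apply (ex_RInt_minus (V:=R_CompleteNormedModule)); auto.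
  2: apply (ex_RInt_scal (V:=R_CompleteNormedModule)); auto.
  assert (mass_flux_0 : mass_flux 0 = 0)
    by apply (RInt_point (V:=R_CompleteNormedModule)).
  unfold flow_force_potential in Hpotential.
  rewrite mass_flux_0, gap_top, K_bottom in Hpotential.
  unfold minus, plus, opp, scal in Hpotential; simpl in Hpotential.
  unfold mult in Hpotential; simpl in Hpotential.
  ring_simplify in Hpotential. lra.
Qed.

End FlowForceDifference.

Lemma height_eq_q_independent F rho rhop H Hp K Kp :
  deriv_on K Kp -> height_eq F rho rhop H Hp (fun _ p => K p) ->
  (forall p, -1 < p < 0 ->
     is_derive (bernoulli_gap Hp Kp) p (/ F ^ 2 * rhop p * (K p - H p))) /\
  bernoulli_gap Hp Kp 0 = / F ^ 2 * rho 0 * (K 0 - 1) /\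
  K (-1) = 0.
Proof.
  intros dK [hq [hp [Hhq [Hhp [_ [Hbulk [Htop Hbot]]]]]]].
  assert (hq0 : forall q p, Icl p -> hq q p = 0).
  { intros q p Ip. rewrite <- (is_derive_unique _ _ _ (Hhq q p Ip)). apply Derive_const. }
  assert (hpK : forall q p, Icl p -> hp q p = Kp p).
  { intros q p Ip. exact (deriv_on_unique _ _ _ _ (Hhp q) dK Ip). }
  assert (I0 : Icl 0) by (unfold Icl; lra).
  split; [|split].
  - intros p Hp0. assert (Ip : Icl p) by (unfold Icl; lra).
    destruct (Hbulk 0 p Hp0) as [A [B [HA [HB HAB]]]].
    assert (B0 : B = 0).
    { apply (is_derive_unique (fun t => hq t p / hp t p) 0) in HB. rewrite <- HB.
      rewrite (Derive_ext _ (fun _ => 0)); [apply Derive_const|].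
      intro t. rewrite (hq0 t p Ip). unfold Rdiv. apply Rmult_0_l. }
    replace (/ F ^ 2 * rhop p * (K p - H p)) with A by lra.
    refine (is_derive_Icl_ext _ _ _ _ _ Hp0 HA). intros s Is.
    unfold bernoulli_gap. rewrite (hq0 0 s Is), (hpK 0 s Is). unfold Rdiv. ring.
  - specialize (Htop 0). cbv beta in Htop. rewrite (hq0 0 0 I0), (hpK 0 0 I0) in Htop.
    unfold bernoulli_gap. replace (1 + 0 ^ 2) with 1 in Htop by ring. lra.
  - exact (Hbot 0).
Qed.

Lemma flow_force_extend F rho H Hp K Kp :
  flow_force F rho H Hp K Kp
  = RInt (flow_force_density (/ F ^ 2) (extend rho) (extend H) (extend Hp)
            (extend K) (extend Kp)) (-1) 0.
Proof.
  apply RInt_ext. rewrite Rmin_left, Rmax_right by lra. intros x Hx.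
  assert (Ix : Icl x) by (unfold Icl; lra).
  unfold flow_force_density. rewrite !(extend_id _ _ Ix).
  rewrite (RInt_ext (fun y => extend rho y * extend Hp y) (fun y => rho y * Hp y)); [easy|].
  intros y Hy. rewrite Rmin_right, Rmax_left in Hy by lra.
  assert (Iy : Icl y) by (unfold Icl; lra). now rewrite !(extend_id _ _ Iy).
Qed.

Lemma flow_force_difference_on_Icl F rho rhop H Hp K Kp :
  deriv_on rho rhop -> deriv_on H Hp -> deriv_on K Kp -> cont_on Hp -> cont_on Kp ->
  (forall p, Icl p -> 0 < Hp p) -> (forall p, Icl p -> 0 < Kp p) ->
  (forall p, -1 < p < 0 ->
     is_derive (bernoulli_gap Hp Kp) p (/ F ^ 2 * rhop p * (K p - H p))) ->
  bernoulli_gap Hp Kp 0 = / F ^ 2 * rho 0 * (K 0 - H 0) ->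
  K (-1) = H (-1) ->
  flow_force F rho H Hp K Kp - flow_force F rho H Hp H Hp
  = / 4 * RInt (cubic_gap Hp Kp) (-1) 0.
Proof.
  intros drho dH dK cHp cKp Hp_pos Kp_pos gap_deriv gap_top K_bottom.
  assert (gap_extend : forall p, Icl p ->
    bernoulli_gap (extend Hp) (extend Kp) p = bernoulli_gap Hp Kp p)
    by (intros p Ip; unfold bernoulli_gap; now rewrite !extend_id).
  rewrite !flow_force_extend.
  rewrite (RInt_ext (cubic_gap Hp Kp) (cubic_gap (extend Hp) (extend Kp))).
  2: { intros x Hx. rewrite Rmin_left, Rmax_right in Hx by lra.
       unfold cubic_gap. now rewrite !extend_id by (unfold Icl; lra). }
  apply (flow_force_difference _ _ (extend rhop) _ _ _ _
    (continuous_extend_deriv_on _ _ drho) (continuous_extend_deriv_on _ _ dH)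
    (continuous_extend _ cHp) (continuous_extend_deriv_on _ _ dK) (continuous_extend _ cKp)
    (fun x => Hp_pos _ (Icl_clamp x)) (fun x => Kp_pos _ (Icl_clamp x))
    (fun x => is_derive_extend _ _ x drho) (fun x => is_derive_extend _ _ x dH)
    (fun x => is_derive_extend _ _ x dK)).
  - intros x Hx. rewrite !extend_id by (unfold Icl; lra).
    apply (is_derive_Icl_ext (bernoulli_gap Hp Kp)); [|exact Hx|now apply gap_deriv].
    intros y Iy. symmetry. now apply gap_extend.
  - assert (I0 : Icl 0) by (unfold Icl; lra).
    now rewrite gap_extend, !extend_id.
  - assert (Im1 : Icl (-1)) by (unfold Icl; lra).
    now rewrite !extend_id.
Qed.

Theorem lemma4p9
  (alpha F : R) (rho rhop rhopp H Hp Hpp Hppp K Kp Kpp : R -> R)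
  (Halpha : 0 < alpha < 1)
  (Hrho : C2a_on alpha rho rhop rhopp)
  (Hrho_pos : forall p, Icl p -> 0 < rho p)
  (Hrhop : forall p, Icl p -> rhop p <= 0)
  (HH : C3a_on alpha H Hp Hpp Hppp)
  (HHm1 : H (-1) = 0) (HH0 : H 0 = 1)
  (HHp : forall p, Icl p -> 0 < Hp p)
  (HF : 0 < F)
  (HK : C2_on K Kp Kpp)
  (HKp : forall p, Icl p -> 0 < Kp p)
  (Hsol : height_eq F rho rhop H Hp (fun _ p => K p))
  (HS : flow_force F rho H Hp K Kp = flow_force F rho H Hp H Hp) :
  RInt (fun p => (Kp p - Hp p)^3 / ((Hp p)^2 * (Kp p)^2)) (-1) 0 = 0.
Proof.
  destruct HK as [dK [dKp _]], HH as [dH [dHp _]], Hrho as [[drho _] _].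
  destruct (height_eq_q_independent _ _ _ _ _ _ _ dK Hsol)
    as [gap_deriv [gap_top K_bottom]].
  rewrite <- HH0 in gap_top. rewrite <- HHm1 in K_bottom.
  assert (Hdiff := flow_force_difference_on_Icl F rho rhop H Hp K Kp drho dH dK
    (deriv_on_cont_on _ _ dHp) (deriv_on_cont_on _ _ dKp) HHp HKp
    gap_deriv gap_top K_bottom).
  rewrite HS, Rminus_diag in Hdiff.
  change (RInt (cubic_gap Hp Kp) (-1) 0 = 0). lra.
Qed.
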